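(* Let $n\geqslant1$, $N\in\mathbb{N}$, $\gamma\in\mathbb{R}\setminus\{0\}$, let $a_0,\ldots,a_n$ be holomorphic near $t=0$ with $a_n\equiv1$, and let $M(x,t,u_0,\ldots,u_n)=t^{-\mu}\widetilde M(x,t,u_0,\ldots,u_n)$, where $\mu\geqslant0$ is an integer and $\widetilde M$ is holomorphic near $0\in\mathbb{C}^{n+3}$ ($\mu$ is the pole order of $M$ at $t=0$). Assume that for every integer $k\geqslant1$ the polynomial $P_k(\lambda)=\sum_{j=0}^n a_j(0)(k+N+{\rm i}\gamma\lambda)^j$ has no integer roots. Let $\psi=\sum_{k=1}^\infty c_k(x^{{\rm i}\gamma})x^k$, with $c_k$ meromorphic at $t=0$, be a formal solution of $$\sum_{j=0}^n a_j(x^{{\rm i}\gamma})(\delta+N)^j u=x\,M(x,x^{{\rm i}\gamma},u,\delta u,\ldots,\delta^n u),\qquad\delta=x\frac{d}{dx}.$$ Then for every $k\geqslant1$, the pole order $\nu_k$ of $c_k(t)$ at $t=0$ satisfies $\nu_k\leqslant k\mu$.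
   Context: $x^{{\rm i}\gamma}=e^{{\rm i}\gamma\ln x}$. On exotic series $\delta$ acts termwise by $\delta\bigl(p(x^{{\rm i}\gamma})x^k\bigr)=\bigl((k+{\rm i}\gamma\,t\tfrac{d}{dt})p\bigr)(x^{{\rm i}\gamma})x^k$; substitution into $M$ is formal. The pole order of $c_k$ is the integer $\nu_k$ with $c_k(t)=t^{-\nu_k}\cdot(\text{holomorphic function nonvanishing at }0)$ (negative if $c_k$ vanishes at $0$). *)

From HB Require Import structures.
From mathcomp Require Import all_boot all_order all_algebra.
From mathcomp Require Import boolp classical_sets fsbigop reals.
From mathcomp Require Import complex.
Set Implicit Arguments. Unset Strict Implicit. Unset Printing Implicit Defensive.
Import Order.TTheory GRing.Theory Num.Theory.
Local Open Scope ring_scope.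
Local Open Scope complex_scope.

(* Exotic series  sum_{k,m} f k m  t^m x^k  with t = x^{i gamma} treated   *)
(* formally; f : nat -> int -> C  (x-exponent k, t-exponent m).           *)
Definition exo (R : realType) := nat -> int -> R[i].

Section Exotic.
Variable R : realType.
Local Notation C := R[i].

(* sum over all of a type for a finitely supported summand (fsbigop);    *)
(* all uses below are finitely supported under the standing hypotheses.  *)
Definition fsumZ (F : int -> C) : C := \sum_(m \in [set: int]) F m.
Definition fsumN (F : nat -> C) : C := \sum_(m \in [set: nat]) F m.

(* holomorphic near 0: power series with positive radius of convergence *)
Definition holo1 (a : nat -> C) : Prop :=
  exists r : C, 0 < r /\ exists B : C, forall p, `|a p| * r ^+ p <= B.

(* meromorphic at 0: Laurent series, finitely many negative powers,
   positive radius of convergence *)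
Definition mero1 (c : int -> C) : Prop :=
  (exists L : int, forall m, m < L -> c m = 0) /\
  exists r : C, 0 < r /\ exists B : C, forall p : nat, `|c p%:Z| * r ^+ p <= B.

Definition pole_order (c : int -> C) (nu : int) : Prop :=
  c (- nu) != 0 /\ forall m, m < - nu -> c m = 0.

(* holomorphic near 0 in C^{n+3}: power series in (x, t, u_0..u_n)
   with coefficients Mt ax at au, convergent on some polydisc *)
Definition holoM (n : nat) (Mt : nat -> nat -> {ffun 'I_n.+1 -> nat} -> C) :=
  exists r : C, 0 < r /\ exists B : C, forall ax tx au,
    `|Mt ax tx au| * r ^+ (ax + tx + \sum_(j < n.+1) au j)%N <= B.

(* delta = x d/dx acting on exotic series, t = x^{i gamma} *)
Definition delta (gamma : R) (f : exo R) : exo R :=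
  fun k m => (k%:R + 'i * gamma%:C * m%:~R) * f k m.

Definition deltaN (gamma : R) (N : nat) (f : exo R) : exo R :=
  fun k m => delta gamma f k m + N%:R * f k m.

Definition tmul (a : nat -> C) (f : exo R) : exo R :=
  fun k m => fsumN (fun q => a q * f k (m - q%:Z)).

Definition emul (f g : exo R) : exo R :=
  fun k m => \sum_(i < k.+1) fsumZ (fun m1 => f i m1 * g (k - i)%N (m - m1)).

Definition eone : exo R := fun k m => if (k == 0%N) && (m == 0) then 1 else 0.

Definition epow (f : exo R) (e : nat) : exo R := iter e (emul f) eone.

Definition psi_of (c : nat -> int -> C) : exo R :=
  fun k m => if k == 0%N then 0 else c k m.

Definition lhs (n N : nat) (gamma : R) (a : nat -> nat -> C) (u : exo R) : exo R :=
  fun k m => \sum_(j < n.+1) tmul (a j) (iter j (deltaN gamma N) u) k m.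

(* formal composition  Mt(x, t, u, delta u, ..., delta^n u) *)
Definition Mcomp (n : nat) (gamma : R) (Mt : nat -> nat -> {ffun 'I_n.+1 -> nat} -> C)
  (u : exo R) : exo R :=
  fun k m => \sum_(ax < k.+1)
     \sum_(au \in [set: {ffun 'I_n.+1 -> nat}])
       fsumN (fun tx => Mt ax tx au *
         (\big[emul/eone]_(j < n.+1) epow (iter j (delta gamma) u) (au j))
           (k - ax)%N (m - tx%:Z)).

(* right-hand side  x * t^{-mu} * Mt(...) *)
Definition rhs (n : nat) (gamma : R) (mu : nat)
  (Mt : nat -> nat -> {ffun 'I_n.+1 -> nat} -> C) (u : exo R) : exo R :=
  fun k m => if k is K.+1 then Mcomp gamma Mt u K (m + mu%:Z) else 0.

Definition Pk (n N : nat) (gamma : R) (a : nat -> nat -> C) (k : nat) : {poly C} :=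
  \sum_(j < n.+1) a j 0%N *: (((k + N)%:R)%:P + ('i * gamma%:C) *: 'X) ^+ j.

End Exotic.

From HB Require Import structures.
From mathcomp Require Import all_boot all_order all_algebra.
From mathcomp Require Import boolp classical_sets fsbigop reals.
From mathcomp Require Import complex.
From mathcomp Require Import zify ring.
Import Order.TTheory GRing.Theory Num.Theory.
Local Open Scope ring_scope.
Local Open Scope complex_scope.

(* Induction on k, and for fixed k on the t-exponent m from below (possible
   since c_k has finitely many negative powers).  If m < -k mu and all
   c_{k,m'} with m' < m vanish, the coefficient of x^k t^m on the left is
   P_k(m) c_{k,m}: only a_j(0) meets the lowest term, and (delta + N) acts on
   t^m x^k by k + N + i gamma m.  On the right, x t^{-mu} times products of
   the c_i, i < k, each of pole order at most i mu, has pole order at most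
   (k-1) mu + mu, so that coefficient is 0.  As P_k has no integer root,
   c_{k,m} = 0. *)

Lemma int_ind_below (P : int -> Prop) (L B : int) :
  (forall m, m < L -> P m) ->
  (forall m, m < B -> (forall m', m' < m -> P m') -> P m) ->
  forall m, m < B -> P m.
Proof.
move=> P_low P_step.
suff P_upto d (m : int) : m < L + d%:Z -> m < B -> P m.
  by move=> m mB; apply: (P_upto `|m - L|.+1) => //; have := lez_abs (m - L); lia.
elim: d m => [|d IHd] m mLd mB; first by apply: P_low; lia.
have [mLd'|mLd'] := ltP m (L + d%:Z); first exact: IHd.
by apply: P_step => // m' m'm; apply: IHd; lia.
Qed.

Section PoleBound.
Variables (R : realType) (mu : nat).

Definition pole_bound (K : nat) (f : exo R) :=
  forall k (m : int), (k <= K)%N -> m < - (k * mu)%N%:Z -> f k m = 0.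

Lemma pole_bound_eone K : pole_bound K (eone R).
Proof.
move=> k m _ mlt; rewrite /eone; case: eqP => [k0|] //.
by rewrite ifF //; apply/eqP => m0; move: mlt; rewrite k0 m0 mul0n.
Qed.

Lemma pole_bound_delta K gamma f : pole_bound K f -> pole_bound K (delta gamma f).
Proof. by move=> fK k m kK mlt; rewrite /delta fK // mulr0. Qed.

Lemma pole_bound_iter_delta K gamma f j :
  pole_bound K f -> pole_bound K (iter j (delta gamma) f).
Proof. by move=> fK; elim: j => //= j; apply: pole_bound_delta. Qed.

Lemma pole_bound_emul K f g :
  pole_bound K f -> pole_bound K g -> pole_bound K (emul f g).
Proof.
move=> fK gK k m kK mlt; rewrite /emul big1 // => i _.
rewrite /fsumZ fsbig1 // => m1 _.
have ik : (i <= k)%N by rewrite -ltnS.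
have [m1lt|m1ge] := ltP m1 (- (i * mu)%N%:Z).
  by rewrite fK ?mul0r //; apply: leq_trans kK.
have imu : (i * mu <= k * mu)%N by rewrite leq_mul2r ik orbT.
rewrite gK ?mulr0 //; first exact: leq_trans (leq_subr _ _) kK.
by rewrite mulnBl; move: mlt m1ge imu; lia.
Qed.

Lemma pole_bound_epow K f e : pole_bound K f -> pole_bound K (epow f e).
Proof.
move=> fK; elim: e => [|e IHe] /=; first exact: pole_bound_eone.
exact: pole_bound_emul.
Qed.

Lemma pole_bound_monomial K n gamma u (au : {ffun 'I_n.+1 -> nat}) :
  pole_bound K u ->
  pole_bound K (\big[@emul R/eone R]_(j < n.+1) epow (iter j (delta gamma) u) (au j)).
Proof.
move=> uK; apply: (big_ind (pole_bound K)).
- exact: pole_bound_eone.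
- exact: pole_bound_emul.
- by move=> j _; apply/pole_bound_epow/pole_bound_iter_delta.
Qed.

Lemma rhs_below_eq0 n gamma (Mt : nat -> nat -> {ffun 'I_n.+1 -> nat} -> R[i]) u k m :
  pole_bound k.-1 u -> m < - (k * mu)%N%:Z -> rhs gamma mu Mt u k m = 0.
Proof.
case: k => [//|K] /= uK mlt.
rewrite /Mcomp big1 // => ax _; rewrite fsbig1 // => au _.
rewrite /fsumN fsbig1 // => tx _.
rewrite (@pole_bound_monomial K n) ?mulr0 ?leq_subr //.
have axK : (ax <= K)%N by rewrite -ltnS.
have Kmu : ((K - ax) * mu <= K * mu)%N by rewrite leq_mul2r leq_subr orbT.
by move: mlt Kmu; rewrite mulSn; lia.
Qed.

End PoleBound.

Arguments pole_bound {R}.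

Lemma fsumN_at0 (R : realType) (F : nat -> R[i]) :
  (forall q, q != 0%N -> F q = 0) -> fsumN F = F 0%N.
Proof.
move=> F0; rewrite /fsumN -(fsbig_widen [set 0%N]) ?fsbig_set1 //.
by move=> q [_ /= q0]; apply: F0; apply/eqP.
Qed.

Lemma iter_deltaNE (R : realType) gamma N j (f : exo R) k m :
  iter j (deltaN gamma N) f k m =
  (k%:R + 'i * gamma%:C * m%:~R + N%:R) ^+ j * f k m.
Proof.
elim: j => [|j IHj] /=; first by rewrite mul1r.
by rewrite /deltaN /delta IHj exprS; ring.
Qed.

Lemma lhs_lowest (R : realType) n N gamma a (c : nat -> int -> R[i]) k m :
  (1 <= k)%N -> (forall m', m' < m -> c k m' = 0) ->
  lhs n N gamma a (psi_of c) k m = (Pk n N gamma a k).[m%:~R] * c k m.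
Proof.
move=> k1 c_below; rewrite /lhs /Pk horner_sum mulr_suml; apply: eq_bigr => j _.
have k0 : (k == 0%N) = false by apply/eqP; lia.
rewrite /tmul fsumN_at0 => [|q q0].
  rewrite iter_deltaNE subr0 /psi_of k0 hornerZ horner_exp hornerD hornerC.
  by rewrite hornerZ hornerX natrD mulrA addrAC.
rewrite iter_deltaNE /psi_of k0 c_below ?mulr0 //.
by move: q0; rewrite eqn0Ngt => /negbNE; lia.
Qed.

Section FormalSolution.
Context {R : realType} {n N : nat} {gamma : R} {mu : nat}.
Context {a : nat -> nat -> R[i]} {Mt : nat -> nat -> {ffun 'I_n.+1 -> nat} -> R[i]}.
Context {c : nat -> int -> R[i]}.
Hypothesis Pk_no_int_root :
  forall k, (1 <= k)%N -> forall z : int, ~~ root (Pk n N gamma a k) z%:~R.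
Hypothesis c_mero : forall k, (1 <= k)%N -> mero1 (c k).
Hypothesis psi_solution :
  forall k m, lhs n N gamma a (psi_of c) k m = rhs gamma mu Mt (psi_of c) k m.

Lemma lowest_coef_eq0 k m :
  (1 <= k)%N -> pole_bound mu k.-1 (psi_of c) -> m < - (k * mu)%N%:Z ->
  (forall m', m' < m -> c k m' = 0) -> c k m = 0.
Proof.
move=> k1 psiK mlt c_below.
have := psi_solution k m.
rewrite lhs_lowest // rhs_below_eq0 // => /eqP; rewrite mulf_eq0 => /orP[Pm|/eqP //].
by have := Pk_no_int_root k k1 m; rewrite /root Pm.
Qed.

Lemma psi_pole_bound K : pole_bound mu K (psi_of c).
Proof.
elim: K => [|K IHK] k m; first by rewrite leqn0 => /eqP->.
rewrite leq_eqVlt => /orP[/eqP->|]; last by move=> kK; apply: IHK.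
rewrite /psi_of /=; have [L c_low] := (c_mero K.+1 (ltn0Sn K)).1.
move: m; apply: (int_ind_below (fun m => c K.+1 m = 0) _ _ c_low) => m m_lt c_below.
exact: lowest_coef_eq0.
Qed.

End FormalSolution.

Theorem lemma3 (R : realType) (n N : nat) (gamma : R) (mu : nat)
  (a : nat -> nat -> R[i])
  (Mt : nat -> nat -> {ffun 'I_n.+1 -> nat} -> R[i])
  (c : nat -> int -> R[i]) :
  (1 <= n)%N ->
  gamma != 0 ->
  (forall j, (j <= n)%N -> holo1 (a j)) ->
  (forall p, a n p = (p == 0%N)%:R) ->
  holoM Mt ->
  ((0 < mu)%N -> exists ax au, Mt ax 0%N au != 0) ->
  (forall k, (1 <= k)%N -> forall z : int, ~~ root (Pk n N gamma a k) z%:~R) ->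
  (forall k, (1 <= k)%N -> mero1 (c k)) ->
  (forall k m, lhs n N gamma a (psi_of c) k m = rhs gamma mu Mt (psi_of c) k m) ->
  forall k, (1 <= k)%N -> forall nu : int, pole_order (c k) nu -> nu <= (k * mu)%:Z.
Proof.
move=> _ _ _ _ _ _ Pk_no_root c_mero psi_sol k k1 nu [c_nu _].
rewrite leNgt; apply/negP => nu_gt.
have := psi_pole_bound Pk_no_root c_mero psi_sol k k (- nu) (leqnn k).
rewrite /psi_of gtn_eqF // => c_low.
by move: c_nu; rewrite c_low ?eqxx //; lia.
Qed.
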